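(* Let $X$ be an extensible marked Dynkin diagram with $d$ nodes and let $n\ge d$ be such that $\det(X_n)\ne0$. Fix $i$ with $1\le i\le n$ and write $\omega_i^{(n)}=\sum_{k=1}^n c_k\alpha_k^{(n)}$. Then $a_i=\det(X_n)\,c_n$.
   Context: A marked Dynkin diagram $X$ has nodes $1,\dots,d$ with node $d$ distinguished and symmetrizable generalized Cartan matrix $C(X)$. For $m\ge d$, $X_m$ is obtained by attaching a simply-laced chain of new nodes $d+1,\dots,m$ to node $d$ (so $C(X_m)$ has $C(X)$ as upper-left block, $2$ on the remaining diagonal, $-1$ in positions $(i,i+1),(i+1,i)$ for $d\le i<m$, $0$ elsewhere); $X_{d-1}$ denotes $X$ with node $d$ and its edges deleted. $\det(Y)$ is the determinant of the generalized Cartan matrix of $Y$. The sequence $\det(X_m)$, $m\ge d$, is arithmetic with common difference $\Delta$; $X$ is extensible if $\Delta\ne0$, $\det(X)\ne0$ and $\gcd(\Delta,\det X)=1$. For $\mathfrak g(X_n)$: simple roots $\alpha_k^{(n)}$ and fundamental weights $\omega_i^{(n)}$. The integers $a_i$ are defined by: for $1\le i\le d$, $a_i=\det(X)\,(C(X)^{-1})_{d\,i}$ (equivalently $\det(X)\check\omega_d=\sum_{i=1}^d a_i\check\alpha_i$, where $\check\alpha_i$ are the simple coroots of $X$ and $\check\omega_d$ is the element of their span with $\alpha_j(\check\omega_d)=\delta_{jd}$); for $i>d$, $a_i=\det(X_{i-1})$. *)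

From mathcomp Require Import all_boot all_order all_algebra.
Set Implicit Arguments. Unset Strict Implicit. Unset Printing Implicit Defensive.
Import Order.TTheory GRing.Theory Num.Theory.
Local Open Scope ring_scope.

(* A marked Dynkin diagram X with d nodes is given by its generalized Cartan
   matrix C : 'M[int]_d, with Kac's convention C i j = alpha_j(coroot alpha_i).
   Nodes 1..d are indexed 0..d-1 (0-based); the distinguished node d is index d-1. *)

Definition symmetrizable_gcm (d : nat) (C : 'M[int]_d) : Prop :=
  [/\ (forall i, C i i = 2),
      (forall i j, i != j -> C i j <= 0),
      (forall i j, (C i j == 0) = (C j i == 0)) &
      exists D : 'I_d -> rat, (forall i, 0 < D i) /\
        (forall i j, D i * (C i j)%:~R = D j * (C j i)%:~R)].

(* Entry (p,q) (0-based, as nats) of C(X_m): the upper-left d x d block is C,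
   2 on remaining diagonal, -1 at (p,p+1),(p+1,p) for d-1 <= p (chain attached to
   node d), 0 elsewhere.  For m <= d this is the leading principal m x m block,
   so X_{d-1} is X with node d deleted. *)
Definition ext_entry (d : nat) (C : 'M[int]_d) (p q : nat) : int :=
  match @insub nat (fun k => k < d)%N _ p, @insub nat (fun k => k < d)%N _ q with
  | Some p', Some q' => C p' q'
  | _, _ => if p == q then 2
            else if ((p.+1 == q) || (q.+1 == p)) && (d.-1 <= minn p q)%N then -1
            else 0
  end.

Definition cartan_ext (d : nat) (C : 'M[int]_d) (m : nat) : 'M[int]_m :=
  \matrix_(p < m, q < m) ext_entry C p q.

Definition detX (d : nat) (C : 'M[int]_d) (m : nat) : int := \det (cartan_ext C m).

(* common difference of the arithmetic sequence det(X_m), m >= d *)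
Definition DeltaX (d : nat) (C : 'M[int]_d) : int := detX C d.+1 - detX C d.

Definition extensible (d : nat) (C : 'M[int]_d) : Prop :=
  [/\ DeltaX C != 0, \det C != 0 & gcdz (DeltaX C) (\det C) = 1].

Definition mx_at (d : nat) (A : 'M[rat]_d) (p q : nat) : rat :=
  match @insub nat (fun k => k < d)%N _ p, @insub nat (fun k => k < d)%N _ q with
  | Some p', Some q' => A p' q'
  | _, _ => 0
  end.

(* a_i for 1-based i: for 1 <= i <= d, a_i = det(X) (C(X)^{-1})_{d i};
   for i > d, a_i = det(X_{i-1}). *)
Definition a_coef (d : nat) (C : 'M[int]_d) (i : nat) : rat :=
  if (i <= d)%N then
    (\det C)%:~R * mx_at (invmx (map_mx (fun z : int => z%:~R : rat) C)) d.-1 i.-1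
  else (detX C i.-1)%:~R.

From mathcomp Require Import all_boot all_order all_algebra.
From mathcomp Require Import zify.
Import GRing.Theory.
Set Implicit Arguments.
Local Open Scope ring_scope.

(* By Cramer's rule det(X_n) c_n is the cofactor of C(X_n) at (i, n).  Deleting
   row i and column n, every row of the minor below row max(i, d) has a single
   nonzero entry -1 on the diagonal, so up to the sign (-1)^(i+n) the minor does
   not depend on n >= max(i, d).  For the smallest such n it is det(X_{i-1}) when
   i > d, and the cofactor of C(X) at (i, d), i.e. det(X) C(X)^-1_{d,i}, when
   i <= d. *)

Lemma cramer_delta (R : comPzRingType) n (A : 'M[R]_n) (x : 'cV_n) (i j : 'I_n) :
  A *m x = delta_mx i 0 -> \det A * x j 0 = cofactor A i j.
Proof.
move=> Ax_delta.
have : \adj A *m (A *m x) = \det A *: x by rewrite mulmxA mul_adj_mx mul_scalar_mx.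
by rewrite Ax_delta -colE => /matrixP/(_ j 0); rewrite !mxE => <-.
Qed.

Lemma bump_small h i : (i < h)%N -> bump h i = i.
Proof. by move=> lt_ih; rewrite /bump leqNgt lt_ih. Qed.

Definition nat_mx (R : Type) m (f : nat -> nat -> R) : 'M[R]_m :=
  \matrix_(p < m, q < m) f p q.

Lemma nat_mxE (R : Type) m (f : nat -> nat -> R) (p q : 'I_m) : nat_mx m f p q = f p q.
Proof. exact: mxE. Qed.

Lemma eq_nat_mx (R : Type) m (f g : nat -> nat -> R) :
  (forall p q, (p < m)%N -> (q < m)%N -> f p q = g p q) -> nat_mx m f = nat_mx m g.
Proof. by move=> eq_fg; apply/matrixP => p q; rewrite !nat_mxE eq_fg. Qed.

Lemma minor_nat_mx (R : Type) m (f : nat -> nat -> R) (i j : 'I_m.+1) :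
  row' i (col' j (nat_mx m.+1 f)) = nat_mx m (fun p q => f (bump i p) (bump j q)).
Proof. by apply/matrixP => p q; rewrite !mxE. Qed.

Lemma det_nat_mx_lastrow (R : comPzRingType) m (f : nat -> nat -> R) :
  (forall q, (q < m)%N -> f m q = 0) ->
  \det (nat_mx m.+1 f) = f m m * \det (nat_mx m f).
Proof.
move=> last_row0; rewrite (expand_det_row _ ord_max) big_ord_recr /=.
rewrite big1 ?add0r => [|q _]; last by rewrite nat_mxE /= last_row0 ?mul0r.
rewrite nat_mxE /cofactor minor_nat_mx -signr_odd oddD addbb mul1r.
by congr (_ * \det _); apply: eq_nat_mx => p q lt_pm lt_qm; rewrite !bump_small.
Qed.

Section ChainMinors.

Variables (d : nat) (C : 'M[int]_d.+1).

Lemma cartan_ext_nat_mx m : cartan_ext C m = nat_mx m (ext_entry C).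
Proof. by []. Qed.

Lemma cartan_ext_base : cartan_ext C d.+1 = C.
Proof. by apply/matrixP => p q; rewrite mxE /ext_entry !valK. Qed.

Lemma ext_entry_chain p q : (d < p)%N ->
  ext_entry C p q =
    if p == q then 2
    else if ((p.+1 == q) || (q.+1 == p)) && (d <= minn p q)%N then -1 else 0.
Proof.
by move=> lt_dp; rewrite /ext_entry (@insubN _ (fun k => k < d.+1)%N) // -leqNgt.
Qed.

Definition chain_minor m i : int :=
  \det (nat_mx m (fun p q => ext_entry C (bump i p) q)).

Lemma chain_minorS m i : (d <= m)%N -> (i <= m)%N ->
  chain_minor m.+1 i = - chain_minor m i.
Proof.
move=> le_dm le_im; have bump_m : bump i m = m.+1 by rewrite /bump le_im.
rewrite /chain_minor det_nat_mx_lastrow => [|q lt_qm]; rewrite bump_m ext_entry_chain //.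
  by rewrite ifN ?ifT ?mulN1r //; lia.
by rewrite ifN ?ifN //; lia.
Qed.

Lemma chain_minor_shift b m i : (d <= b)%N -> (i <= b)%N -> (b <= m)%N ->
  (-1) ^+ (i + m) * chain_minor m i = (-1) ^+ (i + b) * chain_minor b i.
Proof.
move=> le_db le_ib /subnKC <-; elim: (m - b)%N => [|k IHk]; first by rewrite addn0.
rewrite addnS chain_minorS; [|lia|lia].
by rewrite addnS exprS mulrN mulN1r mulNr opprK.
Qed.

Lemma cofactor_cartan_ext m i : (i <= m)%N ->
  cofactor (cartan_ext C m.+1) (inord i) ord_max = (-1) ^+ (i + m) * chain_minor m i.
Proof.
move=> le_im; rewrite /cofactor cartan_ext_nat_mx minor_nat_mx inordK; last by lia.
by congr (_ * \det _); apply: eq_nat_mx => p q _ lt_qm; rewrite (@bump_small m).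
Qed.

Lemma chain_minor_diag i : chain_minor i i = detX C i.
Proof.
rewrite /chain_minor /detX cartan_ext_nat_mx.
by congr (\det _); apply: eq_nat_mx => p q lt_pi _; rewrite bump_small.
Qed.

Lemma a_coef_cofactor i : (i <= d)%N -> \det C != 0 ->
  a_coef C i.+1 = (cofactor C (inord i) ord_max)%:~R.
Proof.
move=> le_id detC_neq0; rewrite /a_coef /= ifT // /mx_at.
rewrite (insubT (fun k => k < d.+1)%N (ltnSn d)) (insubT (fun k => k < d.+1)%N le_id).
rewrite -[map_mx _ C]/(map_mx (intr : {rmorphism int -> rat}) C).
have C_unit : map_mx (intr : {rmorphism int -> rat}) C \in unitmx.
  by rewrite unitmxE unitfE det_map_mx intr_eq0.
rewrite /invmx C_unit !mxE mulrA det_map_mx mulfV ?intr_eq0 // mul1r cofactor_map_mx.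
by congr (cofactor _ _ _)%:~R; apply: val_inj; rewrite //= inordK.
Qed.

Lemma a_coef_chain_minor i : \det C != 0 ->
  a_coef C i.+1 = ((-1) ^+ (i + maxn i d) * chain_minor (maxn i d) i)%:~R.
Proof.
move=> detC_neq0; case: (leqP i d) => [le_id | lt_di].
  by rewrite a_coef_cofactor // -cofactor_cartan_ext // cartan_ext_base.
rewrite -signr_odd oddD addbb mul1r chain_minor_diag.
by rewrite /a_coef ifN //; lia.
Qed.

End ChainMinors.

Theorem lemma3p7 (d : nat) (C : 'M[int]_d) (n i : nat) (c : nat -> rat) :
  (0 < d)%N -> symmetrizable_gcm C -> extensible C ->
  (d <= n)%N -> detX C n != 0 ->
  (1 <= i <= n)%N ->
  (forall j : 'I_n,
      \sum_(k < n) ((cartan_ext C n j k)%:~R * c k) = (j.+1 == i)%:R) ->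
  a_coef C i = (detX C n)%:~R * c n.-1.
Proof.
case: d C => [//|d] C _ _ [_ detC_neq0 _] le_dn _ /andP[].
case: n le_dn => [//|n] le_dn; case: i => [//|i] _ le_in weight_eq.
have Mc_delta : map_mx (intr : {rmorphism int -> rat}) (cartan_ext C n.+1)
                  *m \col_k c k = delta_mx (inord i) 0.
  apply/matrixP => j l; rewrite !mxE ord1 eqxx andbT.
  rewrite (_ : (j == inord i) = (j.+1 == i.+1)); last by rewrite eqSS -val_eqE /= inordK.
  by rewrite -weight_eq; apply: eq_bigr => k _; rewrite !mxE.
have := cramer_delta ord_max Mc_delta.
rewrite det_map_mx cofactor_map_mx mxE cofactor_cartan_ext // => ->.
by rewrite a_coef_chain_minor // (@chain_minor_shift _ _ (maxn i d)) //; lia.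
Qed.
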